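(* Assume $V$ satisfies (V1)–(V3). Then $|\nabla V(x)\cdot x|\to0$ as $|x|\to\infty$.
   Context: $N\ge3$, $\alpha\in(0,N)$. (V1) $V$ continuous, $V\ge0$, $V_\infty:=\lim_{|x|\to\infty}V(x)$ exists and is $>0$; (V2) $V(x)\le V_\infty$ for all $x$; (V3) $V\in C^1(\mathbb R^N)$ and there is $\theta\in[0,1)$ such that for every $x\neq0$ the map $t\mapsto \frac{NV(tx)+\nabla V(tx)\cdot(tx)}{t^\alpha}+\frac{(N-2)^3\theta}{4t^{\alpha+2}|x|^2}$ is nonincreasing on $(0,\infty)$. *)

From Stdlib Require Import Reals.
From mathcomp Require Import ssreflect ssrfun ssrbool eqtype ssrnat seq fintype bigop.
Open Scope R_scope.

Definition vec (N : nat) := 'I_N -> R.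

Definition vzero {N : nat} : vec N := fun _ => 0.
Definition vadd {N : nat} (x y : vec N) : vec N := fun i => x i + y i.
Definition vsub {N : nat} (x y : vec N) : vec N := fun i => x i - y i.
Definition vscal {N : nat} (t : R) (x : vec N) : vec N := fun i => t * x i.

Definition dot {N : nat} (x y : vec N) : R := \big[Rplus/0]_(i < N) (x i * y i).
Definition vnorm {N : nat} (x : vec N) : R := sqrt (dot x x).

Definition cont_scalar {N : nat} (V : vec N -> R) : Prop :=
  forall x eps, 0 < eps -> exists delta, 0 < delta /\
    forall y, vnorm (vsub y x) < delta -> Rabs (V y - V x) < eps.

Definition cont_field {N : nat} (g : vec N -> vec N) : Prop :=
  forall x eps, 0 < eps -> exists delta, 0 < delta /\
    forall y, vnorm (vsub y x) < delta -> vnorm (vsub (g y) (g x)) < eps.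

Definition is_gradient {N : nat} (V : vec N -> R) (g : vec N -> vec N) : Prop :=
  forall x eps, 0 < eps -> exists delta, 0 < delta /\
    forall h, vnorm h < delta ->
      Rabs (V (vadd x h) - V x - dot (g x) h) <= eps * vnorm h.

Definition C1_with_gradient {N : nat} (V : vec N -> R) (g : vec N -> vec N) : Prop :=
  is_gradient V g /\ cont_field g.

Definition lim_infty {N : nat} (f : vec N -> R) (l : R) : Prop :=
  forall eps, 0 < eps -> exists Rr, forall x, Rr < vnorm x -> Rabs (f x - l) < eps.

From Stdlib Require Import Reals Lra FunctionalExtensionality.
From mathcomp Require Import ssreflect ssrbool ssrnat bigop.
Open Scope R_scope.

(* Fix x with |x| = r large and follow V along the ray through x in the
   logarithmic variable: psi(s) = V(e^s x), so that
   psi'(s) = grad V(e^s x) . e^s x.  Hypothesis (V3) says that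
   (N psi + psi' + K e^(-2s)) e^(-alpha s) is nonincreasing, with
   K = (N-2)^3 theta / (4 r^2), which is small for r large.  By (V1)-(V2),
   V_inf - eps <= psi <= V_inf on [-L, L] once r is large.  The mean value
   theorem on [-L, 0] and on [0, L] yields points where |psi'| <= eps / L,
   and the monotone weighted quantity transports these bounds to s = 0 at
   the cost of factors e^(+-alpha L).  Hence
   |psi'(0)| <= 2 alpha L N V_inf + 2 eps / L + N eps + 6 K,
   which is small once L is small, then eps << L, then r large. *)

Section Vectors.

Context {N : nat}.
Implicit Types (x y : vec N) (u v : R).

Lemma dotZl u x y : dot (vscal u x) y = u * dot x y.
Proof.
rewrite /dot /vscal; apply: (big_ind2 (fun p q => p = u * q)) => [|p1 p2 q1 q2 -> ->|i _]; ring.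
Qed.

Lemma dotZr u x y : dot x (vscal u y) = u * dot x y.
Proof.
rewrite /dot /vscal; apply: (big_ind2 (fun p q => p = u * q)) => [|p1 p2 q1 q2 -> ->|i _]; ring.
Qed.

Lemma dot_self_ge0 x : 0 <= dot x x.
Proof. rewrite /dot; apply: (big_ind (fun p => 0 <= p)) => [|p q|i _]; nra. Qed.

Lemma vnorm_ge0 x : 0 <= vnorm x.
Proof. exact: sqrt_pos. Qed.

Lemma vnormZ u x : vnorm (vscal u x) = Rabs u * vnorm x.
Proof.
rewrite /vnorm dotZl dotZr -Rmult_assoc sqrt_mult; [|nra|exact: dot_self_ge0].
by rewrite -sqrt_Rsqr_abs.
Qed.

Lemma vnorm0 : vnorm (@vzero N) = 0.
Proof.
have -> : @vzero N = vscal 0 vzero.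
  by apply: functional_extensionality => i; rewrite /vscal /vzero; ring.
by rewrite vnormZ Rabs_R0 Rmult_0_l.
Qed.

Lemma vscal1 x : vscal 1 x = x.
Proof. by apply: functional_extensionality => i; rewrite /vscal Rmult_1_l. Qed.

Lemma vscalDl u v x : vscal (u + v) x = vadd (vscal u x) (vscal v x).
Proof. by apply: functional_extensionality => i; rewrite /vscal /vadd Rmult_plus_distr_r. Qed.

End Vectors.

Lemma derivable_pt_lim_ray {N} (V : vec N -> R) g y u : is_gradient V g ->
  derivable_pt_lim (fun u => V (vscal u y)) u (dot (g (vscal u y)) y).
Proof.
move=> V_grad eps eps_gt0.
set m := vnorm y + 1.
have y_lt_m : vnorm y < m by rewrite /m; lra.
have m_gt0 : 0 < m by have := vnorm_ge0 y; lra.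
have [delta [delta_gt0 taylor]] :=
  V_grad (vscal u y) (eps / m) (Rdiv_lt_0_compat _ _ eps_gt0 m_gt0).
exists (mkposreal _ (Rdiv_lt_0_compat _ _ delta_gt0 m_gt0)) => h h_neq0 /= h_small.
have h_gt0 : 0 < Rabs h by exact: Rabs_pos_lt.
have hm_lt : Rabs h * m < delta.
  by move: h_small => /(Rmult_lt_compat_r m _ _ m_gt0); rewrite /Rdiv Rmult_assoc Rinv_l; lra.
have := taylor (vscal h y); rewrite vnormZ -vscalDl dotZr.
have hy_le : Rabs h * vnorm y <= Rabs h * m by apply: Rmult_le_compat_l; lra.
move=> /(_ ltac:(lra)) err.
set D := dot _ y in err *; set Q := V _ - V _ in err *.
have -> : Q / h - D = (Q - h * D) * / h by field.
rewrite Rabs_mult Rabs_inv.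
apply: (Rmult_lt_reg_r (Rabs h)) => //; rewrite Rmult_assoc Rinv_l; last lra.
have : eps / m * (Rabs h * vnorm y) < eps / m * (Rabs h * m).
  by apply: Rmult_lt_compat_l; [exact: Rdiv_lt_0_compat | nra].
have -> : eps / m * (Rabs h * m) = eps * Rabs h by field; lra.
lra.
Qed.

Lemma derivable_pt_lim_log_ray {N} (V : vec N -> R) g y s : is_gradient V g ->
  derivable_pt_lim (fun s => V (vscal (exp s) y)) s
    (dot (g (vscal (exp s) y)) (vscal (exp s) y)).
Proof.
move=> V_grad; rewrite dotZr Rmult_comm.
exact: (derivable_pt_lim_comp _ _ _ _ _ (derivable_pt_lim_exp s)
  (derivable_pt_lim_ray V g y (exp s) V_grad)).
Qed.

Lemma exp_le_mono u v : u <= v -> exp u <= exp v.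
Proof. by case/Rle_lt_or_eq_dec=> [/exp_increasing|->]; lra. Qed.

Lemma exp_Ropp_mul_l u : exp (- u) * exp u = 1.
Proof. by rewrite -exp_plus Rplus_opp_l exp_0. Qed.

Lemma exp_mul_oneB_le1 u : exp u * (1 - u) <= 1.
Proof.
have := exp_Ropp_mul_l u; have := exp_ineq1_le (- u); have := exp_pos u; nra.
Qed.

Lemma Rmult_le_of_le_div x y z : 0 < z -> x <= y / z -> z * x <= y.
Proof.
move=> z_gt0 /(Rmult_le_compat_l z _ _ (Rlt_le _ _ z_gt0)).
by rewrite /Rdiv (Rmult_comm y) -Rmult_assoc Rinv_r ?Rmult_1_l; lra.
Qed.

Lemma Rdiv_le_of_le_mul x y z : 0 < z -> x <= y * z -> x / z <= y.
Proof.
move=> z_gt0 /(Rmult_le_compat_r (/ z) _ _ (Rlt_le _ _ (Rinv_0_lt_compat _ z_gt0))).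
by rewrite Rmult_assoc Rinv_r ?Rmult_1_r; lra.
Qed.

Lemma inv_sq_small C delta : 0 < delta ->
  exists R, forall r, R < r -> C / (4 * r ^ 2) <= delta.
Proof.
move=> delta_gt0; exists (Rmax 1 (C / delta)) => r r_large.
have r_gt1 : 1 < r by apply: Rle_lt_trans (Rmax_l _ _) r_large.
have C_lt : C < delta * r.
  have := Rmult_lt_compat_l _ _ _ delta_gt0 (Rle_lt_trans _ _ _ (Rmax_r 1 _) r_large).
  by rewrite /Rdiv (Rmult_comm C) -Rmult_assoc Rinv_r ?Rmult_1_l; lra.
have r_le : r <= 4 * r ^ 2 by nra.
apply: Rdiv_le_of_le_mul; first nra.
by have := Rmult_le_compat_l _ _ _ (Rlt_le _ _ delta_gt0) r_le; lra.
Qed.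

Section LogProfile.

Variables (psi W : R -> R) (n a K c eps L : R).
Hypothesis psi_derive : forall s, derivable_pt_lim psi s (W s).
Hypotheses (n_ge0 : 0 <= n) (a_gt0 : 0 < a) (K_ge0 : 0 <= K) (L_gt0 : 0 < L).
Hypothesis psi_le : forall s, psi s <= c.
Hypothesis psi_ge : forall s, - L <= s -> c - eps <= psi s.
Hypothesis weighted_decay : forall s t, s <= t ->
  (n * psi t + W t + K * exp (-2 * t)) * exp (- (a * t))
    <= (n * psi s + W s + K * exp (-2 * s)) * exp (- (a * s)).

Let H s := n * psi s + W s + K * exp (-2 * s).

Let H_decay s t : s <= t -> H t * exp (- (a * t)) <= H s * exp (- (a * s)).
Proof. exact: weighted_decay. Qed.

Let H0 : H 0 = n * psi 0 + W 0 + K.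
Proof. by rewrite /H Rmult_0_r exp_0 Rmult_1_r. Qed.

Let eps_ge0 : 0 <= eps.
Proof. by have := psi_le 0; have := psi_ge 0; lra. Qed.

Let eps_div_ge0 : 0 <= eps / L.
Proof. by apply: Rmult_le_pos => //; apply/Rlt_le/Rinv_0_lt_compat. Qed.

Let profile_before_origin s : s <= 0 -> H 0 * exp (a * s) <= H s.
Proof.
move=> s_le0; have := H_decay _ _ s_le0.
rewrite Rmult_0_r Ropp_0 exp_0 Rmult_1_r => decay.
have := Rmult_le_compat_r _ _ _ (Rlt_le _ _ (exp_pos (a * s))) decay.
by rewrite Rmult_assoc exp_Ropp_mul_l Rmult_1_r.
Qed.

Let profile_after_origin t : 0 <= t -> H t <= H 0 * exp (a * t).
Proof.
move=> t_ge0; have := H_decay _ _ t_ge0.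
rewrite Rmult_0_r Ropp_0 exp_0 Rmult_1_r => decay.
have := Rmult_le_compat_r _ _ _ (Rlt_le _ _ (exp_pos (a * t))) decay.
by rewrite Rmult_assoc exp_Ropp_mul_l Rmult_1_r.
Qed.

Lemma profile_upper : 0 <= c ->
  W 0 <= (n * c + K * exp (2 * L) + eps / L) * exp (a * L) - n * c + n * eps.
Proof.
move=> c_ge0.
have [s [increment [sL s0]]] := MVT_cor2 psi W (- L) 0 ltac:(lra) (fun s _ => psi_derive s).
have W_le : W s <= eps / L.
  apply: (Rmult_le_reg_r L) => //; rewrite /Rdiv Rmult_assoc Rinv_l; last lra.
  by have := psi_le 0; have := psi_ge _ (Rle_refl _); lra.
set U := n * c + K * exp (2 * L) + eps / L.
have U_ge0 : 0 <= U.
  by have := exp_pos (2 * L); rewrite /U; nra.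
have H_le : H s <= U.
  have := exp_le_mono (-2 * s) (2 * L) ltac:(lra).
  have := psi_le s; rewrite /H /U; nra.
have weighted : H 0 * exp (a * s) <= U by have := profile_before_origin _ (Rlt_le _ _ s0); lra.
have : H 0 <= U * exp (- (a * s)).
  have := Rmult_le_compat_r _ _ _ (Rlt_le _ _ (exp_pos (- (a * s)))) weighted.
  by rewrite Rmult_assoc (Rmult_comm (exp _)) exp_Ropp_mul_l Rmult_1_r.
have := exp_le_mono (- (a * s)) (a * L) ltac:(nra).
have := psi_ge 0 ltac:(lra).
rewrite H0; nra.
Qed.

Lemma profile_lower : eps / L <= n * (c - eps) ->
  (n * (c - eps) - eps / L) * exp (- (a * L)) - K - n * c <= W 0.
Proof.
move=> D_ge0.
have [s [increment [s0 sL]]] := MVT_cor2 psi W 0 L L_gt0 (fun s _ => psi_derive s).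
have W_ge : - (eps / L) <= W s.
  apply: (Rmult_le_reg_r L) => //; rewrite /Rdiv Ropp_mult_distr_l Rmult_assoc Rinv_l; last lra.
  by have := psi_le 0; have := psi_ge L ltac:(lra); lra.
set D := n * (c - eps) - eps / L.
have H_ge : D <= H s.
  have := exp_pos (-2 * s); have := psi_ge s ltac:(lra); rewrite /H /D; nra.
have weighted : D <= H 0 * exp (a * s) by have := profile_after_origin _ (Rlt_le _ _ s0); lra.
have : D * exp (- (a * s)) <= H 0.
  have := Rmult_le_compat_r _ _ _ (Rlt_le _ _ (exp_pos (- (a * s)))) weighted.
  by rewrite Rmult_assoc (Rmult_comm (exp _)) exp_Ropp_mul_l Rmult_1_r.
have := exp_le_mono (- (a * L)) (- (a * s)) ltac:(nra).
have := psi_le 0; rewrite H0 /D; nra.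
Qed.

Lemma profile_abs_le : 0 <= c -> L <= 1 / 2 -> a * L <= 1 / 2 -> eps / L <= n * (c - eps) ->
  Rabs (W 0) <= 2 * a * L * n * c + 2 * (eps / L) + n * eps + 6 * K.
Proof.
move=> c_ge0 L_le aL_le D_ge0.
have upper := profile_upper c_ge0; have lower := profile_lower D_ge0.
have nc_ge0 : 0 <= n * c by nra.
have neps_ge0 : 0 <= n * eps by nra.
have aL_ge0 : 0 <= a * L by nra.
have := exp_mul_oneB_le1 (a * L); have := exp_pos (a * L) => E_gt0 E_le.
have E_le2 : exp (a * L) <= 2 by nra.
have E_sub1 : exp (a * L) - 1 <= 2 * (a * L) by nra.
have e2_le3 : exp (2 * L) <= 3.
  by have := exp_le_mono (2 * L) 1 ltac:(lra); have := exp_le_3; lra.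
have e_le1 : exp (- (a * L)) <= 1 by rewrite -exp_0; apply: exp_le_mono; lra.
have e_ge := exp_ineq1_le (- (a * L)).
have nc_E := Rmult_le_compat_l _ _ _ nc_ge0 E_sub1.
have e2_E := Rmult_le_compat _ _ _ _
  (Rlt_le _ _ (exp_pos (2 * L))) (Rlt_le _ _ (exp_pos (a * L))) e2_le3 E_le2.
have epsL_E := Rmult_le_compat_l _ _ _ eps_div_ge0 E_le2.
have nc_e := Rmult_le_compat_l _ _ _ nc_ge0 (Ropp_le_contravar _ _ e_ge).
have eps_e := Rmult_le_compat_l (n * eps + eps / L) _ _ ltac:(lra) e_le1.
by apply: Rabs_le; split; nra.
Qed.

End LogProfile.

Lemma exists_profile_scales a n c eta : 0 < a -> 0 < n -> 0 < c -> 0 < eta ->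
  exists L eps, (0 < L /\ L <= 1 / 2 /\ a * L <= 1 / 2) /\
    (0 < eps /\ eps / L <= n * (c - eps)) /\
    2 * a * L * n * c + 2 * (eps / L) + n * eps < eta.
Proof.
move=> a_gt0 n_gt0 c_gt0 eta_gt0.
have anc_gt0 : 0 < a * n * c by apply: Rmult_lt_0_compat => //; exact: Rmult_lt_0_compat.
set L := Rmin (1 / 2) (Rmin ((1 / 2) / a) ((eta / 8) / (a * n * c))).
have L_gt0 : 0 < L.
  by apply: Rmin_pos; [|apply: Rmin_pos; apply: Rdiv_lt_0_compat]; lra.
have L_le : L <= 1 / 2 by exact: Rmin_l.
have aL_le : a * L <= 1 / 2.
  by apply: Rmult_le_of_le_div => //; apply: Rle_trans (Rmin_r _ _) (Rmin_l _ _).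
have ancL_le : a * n * c * L <= eta / 8.
  by apply: Rmult_le_of_le_div => //; apply: Rle_trans (Rmin_r _ _) (Rmin_r _ _).
set eps := Rmin (c / 2) (Rmin (n * c / 4 * L) (Rmin (eta / 8 * L) ((eta / 4) / n))).
have eps_gt0 : 0 < eps.
  by apply: Rmin_pos; [|apply: Rmin_pos; [|apply: Rmin_pos]];
    [| |apply: Rmult_lt_0_compat|apply: Rdiv_lt_0_compat]; nra.
have eps_le_c : eps <= c / 2 by exact: Rmin_l.
have epsL_le_nc : eps / L <= n * c / 4.
  by apply: Rdiv_le_of_le_mul => //; apply: Rle_trans (Rmin_r _ _) (Rmin_l _ _).
have epsL_le_eta : eps / L <= eta / 8.
  apply: Rdiv_le_of_le_mul => //.
  by do 2 apply: Rle_trans (Rmin_r _ _) _; exact: Rmin_l.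
have neps_le : n * eps <= eta / 4.
  apply: Rmult_le_of_le_div => //.
  by do 2 apply: Rle_trans (Rmin_r _ _) _; exact: Rmin_r.
exists L, eps; do !split => //; nra.
Qed.

Lemma lim_infty_log_ray {N} (f : vec N -> R) l L eps : lim_infty f l -> 0 < eps ->
  exists R, forall y s, R < vnorm y -> - L <= s -> Rabs (f (vscal (exp s) y) - l) < eps.
Proof.
move=> f_lim eps_gt0; have [R f_near] := f_lim eps eps_gt0.
exists (Rmax 0 R * exp L) => y s y_large s_ge; apply: f_near.
rewrite vnormZ Rabs_right; last exact/Rle_ge/Rlt_le/exp_pos.
have := Rmult_lt_compat_l _ _ _ (exp_pos (- L)) y_large.
rewrite Rmult_comm Rmult_assoc (Rmult_comm (exp L)) exp_Ropp_mul_l Rmult_1_r => M_lt.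
have := Rmult_le_compat_r _ _ _ (vnorm_ge0 y) (exp_le_mono _ _ s_ge).
have := Rmax_r 0 R; lra.
Qed.

Section RadialDecay.

Context {N : nat}.
Variables (V : vec N -> R) (g : vec N -> vec N) (n a c C : R).
Hypotheses (n_gt0 : 0 < n) (a_gt0 : 0 < a) (c_gt0 : 0 < c) (C_ge0 : 0 <= C).
Hypothesis V_grad : is_gradient V g.
Hypothesis V_le : forall x, V x <= c.
Hypothesis V_lim : lim_infty V c.
Hypothesis radial_decay : forall x : vec N, x <> vzero -> forall s t : R, 0 < s -> s <= t ->
  (n * V (vscal t x) + dot (g (vscal t x)) (vscal t x)) / Rpower t a
    + C / (4 * Rpower t (a + 2) * (vnorm x) ^ 2)
  <= (n * V (vscal s x) + dot (g (vscal s x)) (vscal s x)) / Rpower s a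
    + C / (4 * Rpower s (a + 2) * (vnorm x) ^ 2).

Lemma log_weighted_decay y : 0 < vnorm y -> forall s t, s <= t ->
  (n * V (vscal (exp t) y) + dot (g (vscal (exp t) y)) (vscal (exp t) y)
     + C / (4 * vnorm y ^ 2) * exp (-2 * t)) * exp (- (a * t))
  <= (n * V (vscal (exp s) y) + dot (g (vscal (exp s) y)) (vscal (exp s) y)
     + C / (4 * vnorm y ^ 2) * exp (-2 * s)) * exp (- (a * s)).
Proof.
move=> y_gt0 s t st.
have log_form u X : X / Rpower (exp u) a + C / (4 * Rpower (exp u) (a + 2) * vnorm y ^ 2)
    = (X + C / (4 * vnorm y ^ 2) * exp (-2 * u)) * exp (- (a * u)).
  have := exp_pos (a * u); have := exp_pos (2 * u) => e2u_gt0 eau_gt0.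
  rewrite /Rpower !ln_exp Rmult_plus_distr_r exp_plus (_ : -2 * u = - (2 * u)); last ring.
  by rewrite !exp_Ropp; field; repeat split; apply: Rgt_not_eq.
rewrite -!log_form; apply: radial_decay; last exact: exp_le_mono.
- by move=> y0; move: y_gt0; rewrite y0 vnorm0; lra.
- exact: exp_pos.
Qed.

Lemma radial_derivative_vanishes : lim_infty (fun x => Rabs (dot (g x) x)) 0.
Proof.
move=> eta eta_gt0.
have [L [eps [[L_gt0 [L_le aL_le]] [[eps_gt0 D_ge0] scales_small]]]] :=
  exists_profile_scales _ _ _ _ a_gt0 n_gt0 c_gt0 eta_gt0.
set slack := eta - (2 * a * L * n * c + 2 * (eps / L) + n * eps).
have [R1 V_near] := lim_infty_log_ray _ _ L _ V_lim eps_gt0.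
have [R2 K_small] := inv_sq_small C (slack / 12) ltac:(rewrite /slack; lra).
exists (Rmax 0 (Rmax R1 R2)) => y y_large.
have [y_gt0 [y_gt1 y_gt2]] : 0 < vnorm y /\ R1 < vnorm y /\ R2 < vnorm y.
  have := Rmax_l 0 (Rmax R1 R2); have := Rmax_r 0 (Rmax R1 R2).
  by have := Rmax_l R1 R2; have := Rmax_r R1 R2; lra.
have K_ge0 : 0 <= C / (4 * vnorm y ^ 2).
  by apply: Rmult_le_pos => //; apply/Rlt_le/Rinv_0_lt_compat; nra.
have psi_ge s : - L <= s -> c - eps <= V (vscal (exp s) y).
  by move=> s_ge; have /Rabs_def2 := V_near y s y_gt1 s_ge; lra.
have := profile_abs_le _ _ _ _ _ _ _ _ (fun s => derivable_pt_lim_log_ray V g y s V_grad)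
  (Rlt_le _ _ n_gt0) a_gt0 K_ge0 L_gt0 (fun s => V_le _) psi_ge
  (log_weighted_decay _ y_gt0) (Rlt_le _ _ c_gt0) L_le aL_le D_ge0.
rewrite exp_0 vscal1 Rminus_0_r Rabs_Rabsolu.
have := K_small _ y_gt2; rewrite /slack; lra.
Qed.

End RadialDecay.

Theorem lemma2p0 (N : nat) (alpha : R) (V : vec N -> R) (gradV : vec N -> vec N) :
  (3 <= N)%nat ->
  0 < alpha -> alpha < INR N ->
  (* (V1) *)
  cont_scalar V ->
  (forall x, 0 <= V x) ->
  forall Vinf : R, lim_infty V Vinf -> 0 < Vinf ->
  (* (V2) *)
  (forall x, V x <= Vinf) ->
  (* (V3) *)
  C1_with_gradient V gradV ->
  forall theta : R, 0 <= theta -> theta < 1 ->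
  (forall x : vec N, x <> vzero ->
     forall s t : R, 0 < s -> s <= t ->
       (INR N * V (vscal t x) + dot (gradV (vscal t x)) (vscal t x)) / Rpower t alpha
         + (INR N - 2) ^ 3 * theta / (4 * Rpower t (alpha + 2) * (vnorm x) ^ 2)
       <=
       (INR N * V (vscal s x) + dot (gradV (vscal s x)) (vscal s x)) / Rpower s alpha
         + (INR N - 2) ^ 3 * theta / (4 * Rpower s (alpha + 2) * (vnorm x) ^ 2)) ->
  lim_infty (fun x => Rabs (dot (gradV x) x)) 0.
Proof.
move=> N_ge3 alpha_gt0 _ _ _ Vinf V_lim Vinf_gt0 V_le [V_grad _] theta theta_ge0 _ decay.
have N_ge : 3 <= INR N by have /= := le_INR _ _ (leP N_ge3); lra.
apply: (radial_derivative_vanishes _ _ _ _ _ _ _ alpha_gt0 Vinf_gt0 _ V_grad V_le V_lim decay).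
- lra.
- by apply: Rmult_le_pos => //; apply: pow_le; lra.
Qed.
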